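(* There exists a locally finite quasi-transitive planar graph of treewidth at most $2$ that has no periodic orientation, and hence no periodic proper vertex-coloring.
   Context: Locally finite: all degrees finite; quasi-transitive: finitely many $\mathrm{Aut}(G)$-orbits on $V(G)$. An orientation (resp. vertex-coloring) is periodic if the subgroup of automorphisms of $G$ preserving the orientation of every edge (resp. vertex colors) has finitely many orbits on $V(G)$. *)

From Stdlib Require Import Reals List.
Import ListNotations.
Open Scope R_scope.

Section Graphs.
Variable V : Type.
Variable adj : V -> V -> Prop.

Definition simple_graph : Prop :=
  (forall u v, adj u v -> adj v u) /\ (forall v, ~ adj v v).

Definition locally_finite : Prop :=
  forall v, exists l : list V, forall w, adj v w -> In w l.

Definition automorphism (f : V -> V) : Prop :=
  (exists g : V -> V, (forall x, g (f x) = x) /\ (forall y, f (g y) = y)) /\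
  (forall u v, adj u v <-> adj (f u) (f v)).

Definition finitely_many_orbits (H : (V -> V) -> Prop) : Prop :=
  exists reps : list V, forall v, exists r f, In r reps /\ H f /\ f r = v.

Definition quasi_transitive : Prop := finitely_many_orbits automorphism.

Definition orientation (o : V -> V -> Prop) : Prop :=
  (forall u v, o u v -> adj u v) /\
  (forall u v, adj u v -> (o u v <-> ~ o v u)).

Definition preserves_orientation (o : V -> V -> Prop) (f : V -> V) : Prop :=
  forall u v, adj u v -> (o u v <-> o (f u) (f v)).

Definition periodic_orientation (o : V -> V -> Prop) : Prop :=
  finitely_many_orbits (fun f => automorphism f /\ preserves_orientation o f).

Definition proper_coloring (C : Type) (c : V -> C) : Prop :=
  forall u v, adj u v -> c u <> c v.

Definition periodic_coloring (C : Type) (c : V -> C) : Prop :=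
  finitely_many_orbits (fun f => automorphism f /\ forall v, c (f v) = c v).

Definition arc_ok (p : R -> R * R) (a b : R * R) : Prop :=
  (forall t, continuity_pt (fun s => fst (p s)) t) /\
  (forall t, continuity_pt (fun s => snd (p s)) t) /\
  p 0 = a /\ p 1 = b /\
  (forall s t, 0 <= s <= 1 -> 0 <= t <= 1 -> p s = p t -> s = t).

Definition planar_embedding (pos : V -> R * R) (arc : V -> V -> R -> R * R)
  : Prop :=
  (forall u v, pos u = pos v -> u = v) /\
  (forall u v, adj u v -> arc_ok (arc u v) (pos u) (pos v)) /\
  (forall u v t, adj u v -> arc v u t = arc u v (1 - t)) /\
  (forall u v w t, adj u v -> 0 < t < 1 -> arc u v t <> pos w) /\
  (forall u v u' v' s t, adj u v -> adj u' v' ->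
      ~ ((u = u' /\ v = v') \/ (u = v' /\ v = u')) ->
      0 < s < 1 -> 0 < t < 1 -> arc u v s <> arc u' v' t).

Definition planar : Prop :=
  exists pos arc, planar_embedding pos arc.

End Graphs.

Fixpoint chain {T : Type} (e : T -> T -> Prop) (x : T) (l : list T) : Prop :=
  match l with
  | [] => True
  | y :: l' => e x y /\ chain e y l'
  end.

Definition connected_in {T : Type} (e : T -> T -> Prop) (P : T -> Prop) : Prop :=
  forall a b, P a -> P b ->
    exists l, chain e a l /\ last l a = b /\ Forall P l.

Definition is_tree {T : Type} (e : T -> T -> Prop) : Prop :=
  inhabited T /\ simple_graph T e /\ connected_in e (fun _ => True) /\
  (forall (x : T) (l : list T),
      2 <= length l -> NoDup (x :: l) -> chain e x l -> ~ e (last l x) x)%nat.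

Definition tree_decomposition {V T : Type} (adj : V -> V -> Prop)
  (eT : T -> T -> Prop) (bag : T -> list V) : Prop :=
  is_tree eT /\
  (forall v : V, exists t, In v (bag t)) /\
  (forall u v, adj u v -> exists t, In u (bag t) /\ In v (bag t)) /\
  (forall v : V, connected_in eT (fun t => In v (bag t))).

Definition treewidth_le {V : Type} (adj : V -> V -> Prop) (k : nat) : Prop :=
  exists (T : Type) (eT : T -> T -> Prop) (bag : T -> list V),
    tree_decomposition adj eT bag /\ (forall t, length (bag t) <= k + 1)%nat.

From Stdlib Require Import Reals List Lia ZArith Lra Psatz.
Import ListNotations.

(* In the 3-regular tree with a distinguished end every vertex x has a parent and two
   children; join the two children of every x by an edge and add a vertex D x adjacent to
   both, so that x, its children and D x form a diamond.  The vertices D x are the only ones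
   with two neighbours, so automorphisms preserve the parent map and fix the end.  An
   automorphism preserving an orientation or a proper colouring cannot swap two adjacent
   siblings, hence if it fixes a vertex it fixes all its descendants; the 2^d vertices of
   level 0 below one vertex of level d thus lie in distinct orbits, so there are infinitely
   many orbits.  Translations along the levels (xor-ing with the coordinates of a ray) make
   the graph quasi-transitive, the bags {x, children} and {D x, children} arranged along the
   tree have size 3, and drawing the tree vertex (n, k) at (k 2^n, n) with straight edges
   puts every diamond in its own triangle, which gives a planar drawing. *)

Open Scope nat_scope.

(** Node [(n, k)] is the [k]-th vertex of level [n]; levels increase towards the end. *)
Definition node : Type := Z * nat.

Definition parent (x : node) : node := ((fst x + 1)%Z, snd x / 2).
Definition lchild (x : node) : node := ((fst x - 1)%Z, 2 * snd x).
Definition rchild (x : node) : node := ((fst x - 1)%Z, 2 * snd x + 1).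

Fixpoint ancestor (d : nat) (x : node) : node :=
  match d with 0 => x | S d => ancestor d (parent x) end.

Lemma node_eq_dec (x y : node) : {x = y} + {x <> y}.
Proof. decide equality; [apply Nat.eq_dec | apply Z.eq_dec]. Qed.

Lemma parent_lchild x : parent (lchild x) = x.
Proof.
  destruct x as [n k]; unfold parent, lchild; cbn [fst snd].
  f_equal; [lia | now rewrite Nat.mul_comm, Nat.div_mul].
Qed.

Lemma parent_rchild x : parent (rchild x) = x.
Proof.
  destruct x as [n k]; unfold parent, rchild; cbn [fst snd].
  f_equal; [lia|]. rewrite Nat.mul_comm, Nat.div_add_l; auto.
Qed.

Lemma children_of_parent z : z = lchild (parent z) \/ z = rchild (parent z).
Proof.
  destruct z as [n k]; unfold parent, lchild, rchild; cbn [fst snd].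
  pose proof (Nat.mod_upper_bound k 2 ltac:(lia)). pose proof (Nat.div_mod_eq k 2).
  destruct (Nat.eq_dec (k mod 2) 0); [left | right]; f_equal; lia.
Qed.

Lemma child_of_parent_eq z y : parent z = y -> z = lchild y \/ z = rchild y.
Proof. intros <-. apply children_of_parent. Qed.

Lemma lchild_neq_rchild x : lchild x <> rchild x.
Proof. destruct x; unfold lchild, rchild; intros [= H]; lia. Qed.

Lemma parent_neq x : parent x <> x.
Proof. destruct x; unfold parent; intros [= H]; lia. Qed.

Lemma lchild_neq_parent x : lchild x <> parent x.
Proof. destruct x; unfold lchild, parent; intros [= H]; lia. Qed.

Lemma rchild_neq_parent x : rchild x <> parent x.
Proof. destruct x; unfold rchild, parent; intros [= H]; lia. Qed.

Lemma sibling_unique a b c :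
  parent a = parent b -> parent c = parent b -> a <> b -> c <> b -> c = a.
Proof.
  intros Ha Hc Hab Hcb.
  destruct (child_of_parent_eq a _ Ha), (child_of_parent_eq b _ eq_refl),
    (child_of_parent_eq c _ Hc); congruence.
Qed.

Lemma ancestor_eq d n k : ancestor d (n, k) = ((n + Z.of_nat d)%Z, k / 2 ^ d).
Proof.
  revert n k; induction d as [|d IH]; intros n k; cbn [ancestor].
  - rewrite Nat.pow_0_r, Nat.div_1_r. f_equal; lia.
  - unfold parent at 1; cbn [fst snd]. rewrite IH, Nat.Div0.div_div, Nat.pow_succ_r'.
    f_equal; lia.
Qed.

Inductive vertex : Type := T (x : node) | D (x : node).

Definition adj (u v : vertex) : Prop :=
  match u, v with
  | T z, T w => w = parent z \/ z = parent w \/ (parent z = parent w /\ z <> w)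
  | D y, T w | T w, D y => parent w = y
  | D _, D _ => False
  end.

Lemma adj_sym u v : adj u v -> adj v u.
Proof. destruct u, v; simpl; intuition. Qed.

Lemma adj_irrefl v : ~ adj v v.
Proof.
  destruct v as [x|x]; simpl; auto.
  intros [H|[H|[_ H]]]; auto; eapply parent_neq; eauto.
Qed.

Lemma simple_adj : simple_graph vertex adj.
Proof. split; [exact adj_sym | exact adj_irrefl]. Qed.

Lemma locally_finite_adj : locally_finite vertex adj.
Proof.
  intros [x|y].
  - exists [T (parent x); T (lchild (parent x)); T (rchild (parent x)); D (parent x);
            T (lchild x); T (rchild x)].
    intros [z|z] A; simpl in A.
    + destruct A as [->|[A|[A _]]]; simpl; [tauto| |].
      * destruct (child_of_parent_eq z x (eq_sym A)) as [->| ->]; tauto.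
      * destruct (child_of_parent_eq z _ (eq_sym A)) as [->| ->]; tauto.
    + subst; simpl; tauto.
  - exists [T (lchild y); T (rchild y)].
    intros [z|z] A; simpl in A; [|contradiction].
    destruct (child_of_parent_eq z _ A) as [->| ->]; simpl; tauto.
Qed.

Lemma adj_T_lchild x : adj (T x) (T (lchild x)).
Proof. simpl. rewrite parent_lchild. auto. Qed.

Lemma adj_T_rchild x : adj (T x) (T (rchild x)).
Proof. simpl. rewrite parent_rchild. auto. Qed.

Lemma adj_T_parent x : adj (T x) (T (parent x)).
Proof. simpl. auto. Qed.

Lemma D_neighbors y w : adj (D y) w -> w = T (lchild y) \/ w = T (rchild y).
Proof.
  destruct w as [z|z]; simpl; [|contradiction].
  intros H. destruct (child_of_parent_eq z y H) as [->| ->]; auto.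
Qed.

Lemma common_neighbor_children z y :
  adj (T z) (T (lchild y)) -> adj (T z) (T (rchild y)) -> z = y.
Proof.
  simpl. rewrite parent_lchild, parent_rchild.
  pose proof (lchild_neq_rchild y) as N.
  pose proof (parent_neq (lchild y)) as Nl. pose proof (parent_neq (rchild y)) as Nr.
  rewrite parent_lchild in Nl. rewrite parent_rchild in Nr.
  intros [Hl|[Hl|[Hl Hl']]] [Hr|[Hr|[Hr Hr']]]; auto; try congruence.
  destruct (child_of_parent_eq z y Hl); congruence.
Qed.

Section Automorphisms.

Variables (V : Type) (E : V -> V -> Prop).

Lemma automorphism_inv f : automorphism V E f ->
  exists g, automorphism V E g /\ (forall x, g (f x) = x) /\ (forall y, f (g y) = y).
Proof.
  intros [[g [gf fg]] Hf]. exists g. split; [split|split; auto].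
  - exists f; auto.
  - intros u v. rewrite (Hf (g u) (g v)), !fg. tauto.
Qed.

Lemma automorphism_inj f : automorphism V E f -> forall a b, f a = f b -> a = b.
Proof. intros [[g [gf _]] _] a b H. now rewrite <- (gf a), <- (gf b), H. Qed.

Lemma automorphism_adj f u v : automorphism V E f -> E u v -> E (f u) (f v).
Proof. intros [_ Hf]. apply Hf. Qed.

Lemma automorphism_comp f g :
  automorphism V E f -> automorphism V E g -> automorphism V E (fun x => g (f x)).
Proof.
  intros Hf Hg.
  destruct (automorphism_inv f Hf) as [f' [_ [f'f ff']]].
  destruct (automorphism_inv g Hg) as [g' [_ [g'g gg']]].
  split.
  - exists (fun y => f' (g' y)). split; intros; now rewrite ?g'g, ?f'f, ?ff', ?gg'.
  - intros u v. rewrite (proj2 Hf u v). apply Hg.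
Qed.

Definition flips_no_edge (H : (V -> V) -> Prop) : Prop :=
  forall h u v, H h -> E u v -> h u = v -> h v = u -> False.

Definition closed_under_division (H : (V -> V) -> Prop) : Prop :=
  forall f g, H f -> H g -> exists h, H h /\ forall x, h (f x) = g x.

Lemma orientation_stabilizer o : orientation V E o ->
  let H := fun f => automorphism V E f /\ preserves_orientation V E o f in
  flips_no_edge H /\ closed_under_division H.
Proof.
  intros [_ Ho] H. split.
  - intros h u v [_ Ph] Euv hu hv. specialize (Ph u v Euv). rewrite hu, hv in Ph.
    specialize (Ho u v Euv). tauto.
  - intros f g [Hf Pf] [Hg Pg].
    destruct (automorphism_inv f Hf) as [f' [Hf' [f'f ff']]].
    exists (fun x => g (f' x)). split; [split|].
    + now apply automorphism_comp.
    + intros u v Euv. pose proof (automorphism_adj f' u v Hf' Euv) as E'.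
      pose proof (Pf _ _ E') as Pf'. rewrite !ff' in Pf'. pose proof (Pg _ _ E'). tauto.
    + intro x. now rewrite f'f.
Qed.

Lemma coloring_stabilizer (C : Type) (c : V -> C) : proper_coloring V E C c ->
  let H := fun f => automorphism V E f /\ forall v, c (f v) = c v in
  flips_no_edge H /\ closed_under_division H.
Proof.
  intros Pc H. split.
  - intros h u v [_ Ph] Euv hu hv. apply (Pc u v Euv). now rewrite <- (Ph u), hu.
  - intros f g [Hf Pf] [Hg Pg].
    destruct (automorphism_inv f Hf) as [f' [Hf' [f'f ff']]].
    exists (fun x => g (f' x)). split; [split|].
    + now apply automorphism_comp.
    + intro v. now rewrite Pg, <- (Pf (f' v)), ff'.
    + intro x. now rewrite f'f.
Qed.

Lemma not_finitely_many_orbits (H : (V -> V) -> Prop) (a : nat -> V) :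
  closed_under_division H ->
  (forall h i j, H h -> h (a i) = a j -> i = j) ->
  ~ finitely_many_orbits V H.
Proof.
  intros Hdiv Hsep [reps Hreps].
  assert (Hpick : forall m, exists L, length L = m /\ NoDup L /\ incl L reps /\
            forall r, In r L -> exists i f, i < m /\ H f /\ f r = a i).
  { induction m as [|m [L [HL [ND [Hincl Hhit]]]]].
    - exists []. repeat split; [constructor | intros r [] | intros r []].
    - destruct (Hreps (a m)) as [r [f [Hr [Hf fr]]]].
      exists (r :: L). repeat split.
      + simpl; lia.
      + constructor; auto. intro HrL.
        destruct (Hhit r HrL) as [i [g [Hi [Hg gr]]]].
        destruct (Hdiv g f Hg Hf) as [h [Hh hg]].
        specialize (hg r). rewrite gr, fr in hg.
        specialize (Hsep h i m Hh hg). lia.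
      + intros x [<-|Hx]; auto.
      + intros x [<-|Hx]; [exists m, f; split; [lia | auto]|].
        destruct (Hhit x Hx) as [i [g [Hi Hg]]]. exists i, g. split; [lia | auto]. }
  destruct (Hpick (S (length reps))) as [L [HL [ND [Hincl _]]]].
  pose proof (NoDup_incl_length ND Hincl). lia.
Qed.

End Automorphisms.

Notation aut := (automorphism vertex adj).

(* Closes a goal in which two distinct vertices have the same image under [Hf]. *)
Ltac by_injectivity Hf :=
  match type of Hf with automorphism _ _ ?f =>
  match goal with
  | H1 : f ?a = ?c, H2 : f ?b = ?c |- _ =>
      assert (a = b) by (apply (automorphism_inj _ _ f Hf); congruence); congruence
  end end.

Lemma aut_T f x : aut f -> exists x', f (T x) = T x'.
Proof.
  intro Hf. destruct (f (T x)) as [x'|y] eqn:fx; [eauto|exfalso].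
  assert (Nbr : forall w, adj (T x) w -> f w = T (lchild y) \/ f w = T (rchild y)).
  { intros w A. apply D_neighbors. rewrite <- fx. now apply automorphism_adj. }
  pose proof (lchild_neq_rchild x). pose proof (lchild_neq_parent x).
  pose proof (rchild_neq_parent x).
  destruct (Nbr _ (adj_T_lchild x)), (Nbr _ (adj_T_rchild x)), (Nbr _ (adj_T_parent x));
    by_injectivity Hf.
Qed.

Lemma aut_D f y : aut f -> exists y', f (D y) = D y'.
Proof.
  intro Hf. destruct (f (D y)) as [z|y'] eqn:fy; [exfalso|eauto].
  destruct (automorphism_inv _ _ f Hf) as [g [Hg [gf _]]].
  destruct (aut_T g z Hg) as [z' gz]. rewrite <- fy, gf in gz. discriminate.
Qed.

Lemma aut_parent f c c' : aut f -> f (T c) = T c' -> f (T (parent c)) = T (parent c').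
Proof.
  intros Hf fc. set (p := parent c).
  destruct (aut_D f p Hf) as [y fp].
  assert (Hy : y = parent c').
  { enough (adj (T c') (D y)) by auto.
    rewrite <- fc, <- fp. apply automorphism_adj; [auto | simpl; auto]. }
  subst y.
  assert (Nbr : forall w, adj (D p) w ->
            f w = T (lchild (parent c')) \/ f w = T (rchild (parent c'))).
  { intros w A. apply D_neighbors. rewrite <- fp. now apply automorphism_adj. }
  destruct (aut_T f p Hf) as [z fz]. rewrite fz. f_equal.
  pose proof (automorphism_adj _ _ f _ _ Hf (adj_T_lchild p)) as Al.
  pose proof (automorphism_adj _ _ f _ _ Hf (adj_T_rchild p)) as Ar.
  rewrite fz in Al, Ar. pose proof (lchild_neq_rchild p).
  destruct (Nbr (T (lchild p))) as [El|El], (Nbr (T (rchild p))) as [Er|Er];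
    simpl; rewrite ?parent_lchild, ?parent_rchild; auto.
  all: rewrite El in Al; rewrite Er in Ar; try by_injectivity Hf.
  - exact (common_neighbor_children _ _ Al Ar).
  - exact (common_neighbor_children _ _ Ar Al).
Qed.

Lemma aut_ancestor f d c c' :
  aut f -> f (T c) = T c' -> f (T (ancestor d c)) = T (ancestor d c').
Proof.
  revert c c'; induction d as [|d IH]; intros c c' Hf fc; simpl; auto.
  apply IH, aut_parent; auto.
Qed.

Section Stabilizers.

Variable H : (vertex -> vertex) -> Prop.
Hypothesis H_aut : forall f, H f -> aut f.
Hypothesis H_no_flip : flips_no_edge vertex adj H.

(** The two children of a fixed vertex are adjacent, so they cannot be swapped. *)
Lemma stabilizer_fixes_children h c :
  H h -> h (T (parent c)) = T (parent c) -> h (T c) = T c.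
Proof.
  intros Hh hp. pose proof (H_aut h Hh) as Ah.
  destruct (aut_T h c Ah) as [c' hc].
  destruct (node_eq_dec c c') as [<-|Hne]; auto.
  pose proof (aut_parent h c c' Ah hc) as Pc. rewrite hp in Pc.
  destruct (aut_T h c' Ah) as [c'' hc'].
  pose proof (aut_parent h c' c'' Ah hc') as Pc'.
  assert (Sib : parent c' = parent c) by congruence.
  rewrite Sib, hp in Pc'.
  assert (Sib' : parent c'' = parent c') by congruence.
  assert (Hne' : c'' <> c').
  { intros ->. apply Hne. enough (T c = T c') by congruence.
    apply (automorphism_inj _ _ h Ah). congruence. }
  pose proof (sibling_unique c c' c'' (eq_sym Sib) Sib' Hne Hne').
  subst c''. exfalso. apply (H_no_flip h (T c) (T c') Hh); auto.
  simpl. auto.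
Qed.

Lemma stabilizer_fixes_descendants h d c :
  H h -> h (T (ancestor d c)) = T (ancestor d c) -> h (T c) = T c.
Proof.
  revert c; induction d as [|d IH]; intros c Hh hd; simpl in hd; auto.
  apply stabilizer_fixes_children; auto.
Qed.

Lemma level0_orbits_distinct h i j :
  H h -> h (T (0%Z, i)) = T (0%Z, j) -> i = j.
Proof.
  intros Hh hij. set (d := i + j).
  (* [i, j < 2 ^ d], so both nodes lie below [(d, 0)]. *)
  assert (Anc : ancestor d (0%Z, j) = ancestor d (0%Z, i)).
  { rewrite !ancestor_eq, !Nat.div_small; auto;
      pose proof (Nat.pow_gt_lin_r 2 d); lia. }
  pose proof (aut_ancestor h d _ _ (H_aut h Hh) hij) as hd. rewrite Anc in hd.
  apply stabilizer_fixes_descendants in hd; auto. rewrite hd in hij. congruence.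
Qed.

End Stabilizers.

Lemma not_finitely_many_orbits_adj (H : (vertex -> vertex) -> Prop) :
  (forall f, H f -> aut f) -> flips_no_edge vertex adj H ->
  closed_under_division vertex H -> ~ finitely_many_orbits vertex H.
Proof.
  intros Haut Hflip Hdiv.
  apply (not_finitely_many_orbits vertex H (fun i => T (0%Z, i)) Hdiv).
  intros h i j. now apply level0_orbits_distinct.
Qed.

Definition lift (g : node -> node) (v : vertex) : vertex :=
  match v with T x => T (g x) | D x => D (g x) end.

Lemma lift_aut g g' : (forall x, g' (g x) = x) -> (forall y, g (g' y) = y) ->
  (forall x, g (parent x) = parent (g x)) -> aut (lift g).
Proof.
  intros g'g gg' g_parent.
  assert (g_inj : forall a b, g a = g b -> a = b).
  { intros a b E. now rewrite <- (g'g a), <- (g'g b), E. }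
  split.
  - exists (lift g'). split; intros [x|x]; simpl; now rewrite ?g'g, ?gg'.
  - intros [z|z] [w|w]; simpl; rewrite ?g_parent; try tauto.
    + split.
      * intros [->|[->|[Hp Hne]]]; auto.
        right; right. split; [congruence | intro E; now apply Hne, g_inj].
      * intros [E|[E|[Hp Hne]]].
        -- left. apply g_inj. now rewrite g_parent.
        -- right; left. apply g_inj. now rewrite g_parent.
        -- right; right. split; [apply g_inj; now rewrite !g_parent | congruence].
    + split; [intros <-; auto | intro E; apply g_inj; now rewrite g_parent].
    + split; [intros <-; auto | intro E; apply g_inj; now rewrite g_parent].
Qed.

(** The nodes [(n, mask K n)] are the ancestors of [(0, K)] for [n >= 0] and its
    leftmost descendants for [n < 0]; they form a ray, so xor-ing with them commutes
    with [parent]. *)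
Definition mask (K : nat) (n : Z) : nat := K * 2 ^ Z.to_nat (- n) / 2 ^ Z.to_nat n.

Lemma mask_0 K : mask K 0 = K.
Proof. unfold mask. cbn [Z.to_nat Z.opp]. now rewrite Nat.pow_0_r, Nat.mul_1_r, Nat.div_1_r. Qed.

Lemma mask_succ K n : mask K (n + 1) = mask K n / 2.
Proof.
  unfold mask. destruct (Z_lt_le_dec n 0) as [Hn|Hn].
  - replace (Z.to_nat (n + 1)) with 0 by lia. replace (Z.to_nat n) with 0 by lia.
    replace (Z.to_nat (- n)) with (S (Z.to_nat (- (n + 1)))) by lia.
    rewrite Nat.pow_0_r, !Nat.div_1_r, Nat.pow_succ_r'.
    replace (K * (2 * 2 ^ Z.to_nat (- (n + 1)))) with (K * 2 ^ Z.to_nat (- (n + 1)) * 2)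
      by lia.
    now rewrite Nat.div_mul.
  - replace (Z.to_nat (- (n + 1))) with 0 by lia. replace (Z.to_nat (- n)) with 0 by lia.
    replace (Z.to_nat (n + 1)) with (S (Z.to_nat n)) by lia.
    rewrite Nat.Div0.div_div, Nat.pow_succ_r'. f_equal. lia.
Qed.

Lemma lxor_div2 a b : Nat.lxor a b / 2 = Nat.lxor (a / 2) (b / 2).
Proof. pose proof (Nat.shiftr_lxor a b 1) as E. now rewrite !Nat.shiftr_div_pow2 in E. Qed.

Definition translate (d : Z) (K : nat) (x : node) : node :=
  ((fst x + d)%Z, Nat.lxor (snd x) (mask K (fst x))).

Definition untranslate (d : Z) (K : nat) (x : node) : node :=
  ((fst x - d)%Z, Nat.lxor (snd x) (mask K (fst x - d))).

Lemma translate_parent d K x : translate d K (parent x) = parent (translate d K x).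
Proof.
  destruct x as [n k]. unfold translate, parent; cbn [fst snd].
  rewrite mask_succ, lxor_div2. f_equal; lia.
Qed.

Lemma untranslate_translate d K x : untranslate d K (translate d K x) = x.
Proof.
  destruct x as [n k]. unfold translate, untranslate; cbn [fst snd].
  replace (n + d - d)%Z with n by lia.
  now rewrite Nat.lxor_assoc, Nat.lxor_nilpotent, Nat.lxor_0_r.
Qed.

Lemma translate_untranslate d K x : translate d K (untranslate d K x) = x.
Proof.
  destruct x as [n k]. unfold translate, untranslate; cbn [fst snd].
  replace (n - d + d)%Z with n by lia.
  now rewrite Nat.lxor_assoc, Nat.lxor_nilpotent, Nat.lxor_0_r.
Qed.

Lemma translate_origin d K : translate d K (0%Z, 0) = (d, K).
Proof. unfold translate; cbn [fst snd]. now rewrite mask_0, Nat.lxor_0_l. Qed.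

Lemma quasi_transitive_adj : quasi_transitive vertex adj.
Proof.
  exists [T (0%Z, 0); D (0%Z, 0)].
  intros [[d K]|[d K]];
    [exists (T (0%Z, 0)) | exists (D (0%Z, 0))]; exists (lift (translate d K));
    simpl; rewrite translate_origin; repeat split; auto;
    apply (lift_aut _ (untranslate d K));
    auto using untranslate_translate, translate_untranslate, translate_parent.
Qed.

Section Walks.

Context {A : Type}.

Lemma last_cons (a : A) l d : last (a :: l) d = last l a.
Proof.
  revert a d; induction l as [|b l IH]; intros a d; [reflexivity|].
  change (last (b :: l) d = last (b :: l) a). now rewrite !IH.
Qed.

Lemma last_app (l1 l2 : list A) a : last (l1 ++ l2) a = last l2 (last l1 a).
Proof.
  revert a; induction l1 as [|b l1 IH]; intros a; [reflexivity|].
  change ((b :: l1) ++ l2) with (b :: (l1 ++ l2)). now rewrite !last_cons.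
Qed.

Lemma last_In (l : list A) d : l <> [] -> In (last l d) l.
Proof.
  revert d; induction l as [|a l IH]; intros d H; [congruence|]. rewrite last_cons.
  destruct l as [|b l]; [now left | right; apply IH; congruence].
Qed.

Fixpoint penultimate (x : A) (l : list A) : A :=
  match l with
  | [] | [_] => x
  | y :: l' => penultimate y l'
  end.

Lemma penultimate_In (x : A) l : 2 <= length l -> In (penultimate x l) l.
Proof.
  revert x; induction l as [|a l IH]; intros x H; simpl in H; [lia|].
  destruct l as [|b l]; simpl in H; [lia|].
  destruct l as [|c l]; [now left | right; apply (IH a); simpl; lia].
Qed.

Variable e : A -> A -> Prop.

Lemma chain_app a l1 l2 :
  chain e a l1 -> chain e (last l1 a) l2 -> chain e a (l1 ++ l2).
Proof.
  revert a; induction l1 as [|b l1 IH]; intros a H1 H2; simpl in *; auto.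
  destruct H1 as [H H1]. split; auto. apply IH; auto. now rewrite <- last_cons with (d := a).
Qed.

Definition reachable (a b : A) : Prop := exists l, chain e a l /\ last l a = b.

Lemma reachable_refl a : reachable a a.
Proof. now exists []. Qed.

Lemma reachable_step a b : e a b -> reachable a b.
Proof. intro H. now exists [b]. Qed.

Lemma reachable_trans a b c : reachable a b -> reachable b c -> reachable a c.
Proof.
  intros [l1 [C1 L1]] [l2 [C2 L2]]. exists (l1 ++ l2). split.
  - apply chain_app; now rewrite ?L1.
  - now rewrite last_app, L1.
Qed.

Lemma reachable_sym : (forall a b, e a b -> e b a) -> forall a b, reachable a b -> reachable b a.
Proof.
  intros Hsym a b [l [C <-]]. revert a C; induction l as [|y l IH]; intros a C.
  - apply reachable_refl.
  - destruct C as [E C]. rewrite last_cons.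
    apply (reachable_trans _ y); auto. now apply reachable_step, Hsym.
Qed.

Lemma connected_in_all : (forall a b, reachable a b) -> connected_in e (fun _ => True).
Proof.
  intros Hreach a b _ _. destruct (Hreach a b) as [l [C L]].
  exists l. repeat split; auto. now apply Forall_forall.
Qed.

Lemma connected_in_star (S : A -> Prop) c : S c ->
  (forall a, S a -> a = c \/ (e a c /\ e c a)) -> connected_in e S.
Proof.
  intros Sc H a b Sa Sb.
  destruct (H a Sa) as [->|[Eac Eca]], (H b Sb) as [->|[Ebc Ecb]].
  - exists []. simpl; auto.
  - exists [b]. simpl; auto.
  - exists [c]. simpl; auto.
  - exists [c; b]. simpl; auto.
Qed.

End Walks.

Section FunctionGraph.

Context {A : Type}.
Variables (f : A -> A) (rank : A -> Z).
Hypothesis rank_f : forall u, (rank u < rank (f u))%Z.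

Definition fun_edge (u w : A) : Prop := w = f u \/ u = f w.

Lemma fun_edge_sym a b : fun_edge a b -> fun_edge b a.
Proof. unfold fun_edge; tauto. Qed.

(** Once a path without repetition steps down, it can never step up again. *)
Lemma descending_path l y x : NoDup (x :: y :: l) -> x = f y -> chain fun_edge y l ->
  f (last l y) = penultimate x (y :: l) /\ (rank (last l y) <= rank y)%Z.
Proof.
  revert y x; induction l as [|z l IH]; intros y x ND Hx Ch; [simpl; split; auto; lia|].
  apply NoDup_cons_iff in ND as [Nx ND].
  destruct Ch as [[Ez|Ey] Ch].
  - exfalso. apply Nx. rewrite Hx, <- Ez. simpl; auto.
  - destruct (IH z y ND Ey Ch) as [I1 I2].
    rewrite last_cons. split; [exact I1|]. pose proof (rank_f z). rewrite <- Ey in *. lia.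
Qed.

Lemma path_rises_or_ends_descending l x : NoDup (x :: l) -> chain fun_edge x l -> l <> [] ->
  (rank x < rank (last l x))%Z \/ f (last l x) = penultimate x l.
Proof.
  revert x; induction l as [|y l IH]; intros x ND Ch Hne; [congruence|].
  destruct Ch as [[Ey|Ex] Ch].
  - rewrite last_cons. destruct l as [|z l]; [left; subst; simpl; apply rank_f|].
    apply NoDup_cons_iff in ND as [_ ND].
    destruct (IH y ND Ch ltac:(congruence)) as [I|I]; [left|right; exact I].
    pose proof (rank_f x). rewrite <- Ey in *. lia.
  - right. rewrite last_cons. exact (proj1 (descending_path l y x ND Ex Ch)).
Qed.

Lemma fun_graph_acyclic x l :
  2 <= length l -> NoDup (x :: l) -> chain fun_edge x l -> ~ fun_edge (last l x) x.
Proof.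
  intros Hl ND Ch [Ex|Ez].
  - assert (Hne : l <> []) by (destruct l; simpl in Hl; [lia | congruence]).
    pose proof (rank_f (last l x)) as R. rewrite <- Ex in R.
    destruct (path_rises_or_ends_descending l x ND Ch Hne) as [I|I]; [lia|].
    rewrite <- Ex in I. apply NoDup_cons_iff in ND as [Nx _]. apply Nx.
    rewrite I. now apply penultimate_In.
  - destruct l as [|y l]; simpl in Hl; [lia|].
    destruct Ch as [[Ey|Ex] Ch]; rewrite last_cons in Ez.
    + apply NoDup_cons_iff in ND as [_ ND]. apply NoDup_cons_iff in ND as [Ny _].
      apply Ny. rewrite Ey, <- Ez. apply last_In. destruct l; simpl in Hl; [lia | congruence].
    + destruct (descending_path l y x ND Ex Ch) as [_ I].
      pose proof (rank_f x). pose proof (rank_f y). rewrite <- Ez in *. rewrite <- Ex in *.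
      lia.
Qed.

End FunctionGraph.

Definition bag_parent (v : vertex) : vertex := match v with T x => T (parent x) | D x => T x end.

Definition bag_rank (v : vertex) : Z :=
  match v with T x => (2 * fst x)%Z | D x => (2 * fst x - 1)%Z end.

Lemma bag_rank_parent v : (bag_rank v < bag_rank (bag_parent v))%Z.
Proof. destruct v as [[n k]|[n k]]; unfold bag_parent, bag_rank, parent; cbn [fst snd]; lia. Qed.

Definition bag (v : vertex) : list vertex :=
  match v with
  | T x => [T x; T (lchild x); T (rchild x)]
  | D x => [D x; T (lchild x); T (rchild x)]
  end.

Lemma reachable_ancestor d x : reachable (fun_edge bag_parent) (T x) (T (ancestor d x)).
Proof.
  revert x; induction d as [|d IH]; intros x; [apply reachable_refl|].
  apply (reachable_trans _ _ (T (parent x))); [apply reachable_step; now left | apply IH].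
Qed.

Lemma reachable_spine n k m : (n + Z.of_nat k <= m)%Z ->
  reachable (fun_edge bag_parent) (T (n, k)) (T (m, 0)).
Proof.
  intro Hm. apply (reachable_trans _ _ (T ((n + Z.of_nat k)%Z, 0))).
  - pose proof (reachable_ancestor k (n, k)) as R.
    rewrite ancestor_eq, Nat.div_small in R; [exact R | apply Nat.pow_gt_lin_r; lia].
  - set (d := Z.to_nat (m - (n + Z.of_nat k))).
    pose proof (reachable_ancestor d ((n + Z.of_nat k)%Z, 0)) as R.
    rewrite ancestor_eq, Nat.Div0.div_0_l in R.
    now replace (n + Z.of_nat k + Z.of_nat d)%Z with m in R by lia.
Qed.

Lemma decomposition_tree : is_tree (fun_edge bag_parent).
Proof.
  split; [constructor; exact (T (0%Z, 0))|]. split; [|split].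
  - split; [exact (fun_edge_sym bag_parent)|].
    intros v [E|E]; pose proof (bag_rank_parent v); rewrite <- E in *; lia.
  - apply connected_in_all.
    assert (Hspine : forall v, exists m0, forall m, (m0 <= m)%Z ->
              reachable (fun_edge bag_parent) v (T (m, 0))).
    { intros [[n k]|[n k]]; exists (n + Z.of_nat k)%Z; intros m Hm.
      - now apply reachable_spine.
      - apply (reachable_trans _ _ (T (n, k))); [apply reachable_step; now left|].
        now apply reachable_spine. }
    intros a b. destruct (Hspine a) as [ma Ha], (Hspine b) as [mb Hb].
    apply (reachable_trans _ _ (T (Z.max ma mb, 0))); [apply Ha; lia|].
    apply reachable_sym; [exact (fun_edge_sym bag_parent) | apply Hb; lia].
  - apply (fun_graph_acyclic bag_parent bag_rank bag_rank_parent).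
Qed.

Lemma child_in_bag_T c : In (T c) (bag (T (parent c))).
Proof. destruct (children_of_parent c) as [E|E]; rewrite E at 1; simpl; auto. Qed.

Lemma child_in_bag_D c : In (T c) (bag (D (parent c))).
Proof. destruct (children_of_parent c) as [E|E]; rewrite E at 1; simpl; auto. Qed.

Lemma adj_in_bag u v : adj u v -> exists t, In u (bag t) /\ In v (bag t).
Proof.
  destruct u as [z|z], v as [w|w]; simpl; try contradiction.
  - intros [->|[->|[Hp _]]].
    + exists (T (parent z)). split; [apply child_in_bag_T | simpl; auto].
    + exists (T (parent w)). split; [simpl; auto | apply child_in_bag_T].
    + exists (T (parent z)). rewrite Hp at 2. split; apply child_in_bag_T.
  - intros <-. exists (D (parent z)). split; [apply child_in_bag_D | simpl; auto].
  - intros <-. exists (D (parent w)). split; [simpl; auto | apply child_in_bag_D].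
Qed.

Lemma bags_containing_connected v : connected_in (fun_edge bag_parent) (fun t => In v (bag t)).
Proof.
  destruct v as [c|y].
  - apply (connected_in_star _ _ (T (parent c)) (child_in_bag_T c)).
    intros [x|x] Hin; simpl in Hin; destruct Hin as [E|[E|[E|[]]]]; try discriminate;
      injection E as <-; rewrite ?parent_lchild, ?parent_rchild; auto;
      right; unfold fun_edge; simpl; auto.
  - apply (connected_in_star _ _ (D y)); [simpl; auto|].
    intros [x|x] Hin; simpl in Hin; destruct Hin as [E|[E|[E|[]]]]; try discriminate.
    left; congruence.
Qed.

Lemma treewidth_adj_le_2 : treewidth_le adj 2.
Proof.
  exists vertex, (fun_edge bag_parent), bag. split; [split; [|split; [|split]]|].
  - exact decomposition_tree.
  - intros [x|x]; [exists (T x) | exists (D x)]; simpl; auto.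
  - exact adj_in_bag.
  - exact bags_containing_connected.
  - intros [x|x]; simpl; lia.
Qed.

Open Scope R_scope.

Definition scale (n : Z) : R := powerRZ 2 n.

Lemma scale_pos n : 0 < scale n.
Proof. apply powerRZ_lt. lra. Qed.

Lemma scale_pred n : scale n = 2 * scale (n - 1).
Proof.
  unfold scale. replace n with ((n - 1) + 1)%Z at 1 by lia.
  rewrite powerRZ_add by lra. simpl. ring.
Qed.

(** The diamond of [x] is drawn inside the right triangle with corners [T x],
    [T (lchild x)] and [T (rchild x)]. *)
Definition pos (v : vertex) : R * R :=
  match v with
  | T x => (INR (snd x) * scale (fst x), IZR (fst x))
  | D x => (INR (snd x) * scale (fst x) + scale (fst x) / 4, IZR (fst x) - 3 / 4)
  end.

Definition corner_x (x : node) : R := INR (snd x) * scale (fst x).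
Definition width (x : node) : R := scale (fst x) / 2.
Definition level (x : node) : R := IZR (fst x).

Lemma width_pos x : 0 < width x.
Proof. unfold width. pose proof (scale_pos (fst x)). lra. Qed.

Lemma pos_T x : pos (T x) = (corner_x x, level x).
Proof. reflexivity. Qed.

Lemma pos_lchild x : pos (T (lchild x)) = (corner_x x, level x - 1).
Proof.
  destruct x as [n k]. unfold pos, lchild, corner_x, level; cbn [fst snd].
  rewrite minus_IZR, mult_INR, (scale_pred n). simpl (INR 2). f_equal; ring.
Qed.

Lemma pos_rchild x : pos (T (rchild x)) = (corner_x x + width x, level x - 1).
Proof.
  destruct x as [n k]. unfold pos, rchild, corner_x, width, level; cbn [fst snd].
  rewrite minus_IZR, plus_INR, mult_INR, (scale_pred n). simpl (INR 2). simpl (INR 1).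
  f_equal; field.
Qed.

Lemma pos_D x : pos (D x) = (corner_x x + width x / 2, level x - 3 / 4).
Proof. destruct x as [n k]. unfold pos, corner_x, width, level; cbn [fst snd]. f_equal. field. Qed.

Lemma no_int_between (a b : Z) : IZR a < IZR b < IZR a + 1 -> False.
Proof. intros [H1 H2]. apply lt_IZR in H1. rewrite <- plus_IZR in H2. apply lt_IZR in H2. lia. Qed.

Lemma int_eq_of_near (a b : Z) : IZR a - 1 < IZR b < IZR a + 1 -> b = a.
Proof.
  intros [H1 H2]. rewrite <- minus_IZR in H1. rewrite <- plus_IZR in H2.
  apply lt_IZR in H1. apply lt_IZR in H2. lia.
Qed.

Lemma no_nat_multiple_between (a b : nat) q r :
  0 < q -> 0 < r < 1 -> INR b * q = INR a * q + r * q -> False.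
Proof.
  intros Hq Hr E. assert (E' : INR b = INR a + r) by (apply (Rmult_eq_reg_r q); lra).
  assert (H1 : INR a < INR b) by lra. assert (H2 : INR b < INR (S a)) by (rewrite S_INR; lra).
  apply INR_lt in H1. apply INR_lt in H2. lia.
Qed.

Lemma pos_inj u v : pos u = pos v -> u = v.
Proof.
  destruct u as [[n k]|[n k]], v as [[m j]|[m j]]; unfold pos; cbn [fst snd];
    intros [= Ex Ey]; pose proof (scale_pos n).
  - apply eq_IZR in Ey. subst m.
    assert (INR k = INR j) as Ek by (apply (Rmult_eq_reg_r (scale n)); lra).
    apply INR_eq in Ek. now subst.
  - exfalso. apply (no_int_between (m - 1) n). rewrite minus_IZR. lra.
  - exfalso. apply (no_int_between (n - 1) m). rewrite minus_IZR. lra.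
  - assert (m = n) by (apply int_eq_of_near; lra). subst m.
    assert (INR k = INR j) as Ek by (apply (Rmult_eq_reg_r (scale n)); lra).
    apply INR_eq in Ek. now subst.
Qed.

Definition segment (u v : vertex) (t : R) : R * R :=
  (fst (pos u) + t * (fst (pos v) - fst (pos u)),
   snd (pos u) + t * (snd (pos v) - snd (pos u))).

Lemma segment_sym u v t : segment v u t = segment u v (1 - t).
Proof. unfold segment. f_equal; ring. Qed.

Lemma segment_arc_ok u v : pos u <> pos v -> arc_ok (segment u v) (pos u) (pos v).
Proof.
  intro Hne. unfold arc_ok, segment.
  destruct (pos u) as [x1 y1], (pos v) as [x2 y2]; cbn [fst snd].
  split; [intro t; reg|split; [intro t; reg|split; [f_equal; ring|split; [f_equal; ring|]]]].
  intros s t _ _ [= E1 E2].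
  destruct (Req_dec x1 x2) as [Ex|Ex].
  - destruct (Req_dec y1 y2) as [Ey|Ey]; [subst; tauto|].
    apply (Rmult_eq_reg_r (y2 - y1)); lra.
  - apply (Rmult_eq_reg_r (x2 - x1)); lra.
Qed.

Inductive diamond_edge (x : node) : vertex -> vertex -> Prop :=
| de_lchild : diamond_edge x (T x) (T (lchild x))
| de_rchild : diamond_edge x (T x) (T (rchild x))
| de_children : diamond_edge x (T (lchild x)) (T (rchild x))
| de_D_lchild : diamond_edge x (D x) (T (lchild x))
| de_D_rchild : diamond_edge x (D x) (T (rchild x)).

Lemma adj_diamond_edge u v : adj u v -> exists x, diamond_edge x u v \/ diamond_edge x v u.
Proof.
  assert (Hup : forall c, diamond_edge (parent c) (T (parent c)) (T c)).
  { intro c. destruct (children_of_parent c) as [E|E]; rewrite E at 3; constructor. }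
  assert (HD : forall c, diamond_edge (parent c) (D (parent c)) (T c)).
  { intro c. destruct (children_of_parent c) as [E|E]; rewrite E at 3; constructor. }
  destruct u as [z|z], v as [w|w]; simpl; try contradiction.
  - intros [->|[->|[Hp Hne]]]; [exists (parent z); auto | exists (parent w); auto|].
    exists (parent z).
    assert (Sib : forall p a b, a = lchild p \/ a = rchild p -> b = lchild p \/ b = rchild p ->
              a <> b -> diamond_edge p (T a) (T b) \/ diamond_edge p (T b) (T a)).
    { intros p a b [->| ->] [->| ->] Hab; try congruence; [left | right]; constructor. }
    apply Sib; [apply children_of_parent | rewrite Hp; apply children_of_parent | exact Hne].
  - intros <-. exists (parent z). auto.
  - intros <-. exists (parent w). auto.
Qed.

Lemma diamond_edge_avoids_vertices x a b s w :
  diamond_edge x a b -> 0 < s < 1 -> segment a b s <> pos w.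
Proof.
  intros He Hs Eq. destruct x as [n k]. pose proof (scale_pos n).
  destruct He; unfold segment in Eq;
    rewrite ?pos_lchild, ?pos_rchild, ?pos_D, ?pos_T in Eq;
    unfold corner_x, width, level in Eq; cbn [fst snd] in Eq;
    destruct w as [[m j]|[m j]]; unfold pos in Eq; cbn [fst snd] in Eq;
    injection Eq as Ex Ey.
  - apply (no_int_between (n - 1) m). rewrite minus_IZR. lra.
  - assert (m = n) by (apply int_eq_of_near; lra). subst m.
    apply (no_nat_multiple_between j k (scale n) (1/4)); lra.
  - apply (no_int_between (n - 1) m). rewrite minus_IZR. lra.
  - assert (m = n) by (apply int_eq_of_near; lra). subst m.
    assert (s = 3/4) by lra. subst s.
    apply (no_nat_multiple_between k j (scale n) (1/8)); lra.
  - assert (m = (n - 1)%Z) by (apply eq_IZR; rewrite minus_IZR; lra). subst m.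
    rewrite (scale_pred n) in Ex. pose proof (scale_pos (n - 1)).
    apply (no_nat_multiple_between (2 * k) j (scale (n - 1)) s); auto.
    rewrite mult_INR. simpl (INR 2). lra.
  - apply (no_int_between (m - n) 0). rewrite minus_IZR. lra.
  - apply (no_int_between (n - 1) m). rewrite minus_IZR. lra.
  - apply (no_int_between (m - n) 0). rewrite minus_IZR. lra.
  - apply (no_int_between (n - 1) m). rewrite minus_IZR. lra.
  - apply (no_int_between (m - n) 0). rewrite minus_IZR. lra.
Qed.

Definition in_triangle (x : node) (p : R * R) : Prop :=
  level x - 1 <= snd p <= level x /\
  corner_x x <= fst p <= corner_x x + width x * (level x - snd p).

Lemma diamond_edge_in_triangle x a b s :
  diamond_edge x a b -> 0 <= s <= 1 -> in_triangle x (segment a b s).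
Proof.
  intros He Hs. pose proof (width_pos x). unfold in_triangle.
  destruct He; unfold segment; rewrite ?pos_lchild, ?pos_rchild, ?pos_D, ?pos_T;
    cbn [fst snd]; split; split; nra.
Qed.

Lemma triangles_meet_at_corners x x' p : x <> x' ->
  in_triangle x p -> in_triangle x' p -> p = pos (T x) \/ p = pos (T x').
Proof.
  destruct x as [n k], x' as [m j], p as [px py].
  unfold in_triangle, corner_x, width, level; cbn [fst snd].
  intros Hne [[Y1 Y2] [X1 X2]] [[Y3 Y4] [X3 X4]].
  pose proof (scale_pos n). pose proof (scale_pos m).
  assert (L1 : (n - 1 <= m)%Z) by (apply le_IZR; rewrite minus_IZR; lra).
  assert (L2 : (m - 1 <= n)%Z) by (apply le_IZR; rewrite minus_IZR; lra).
  assert (C : m = (n + 1)%Z \/ m = n \/ m = (n - 1)%Z) by lia.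
  destruct C as [C|[C|C]]; subst m; rewrite ?minus_IZR, ?plus_IZR in *.
  - left. assert (py = IZR n) by lra. subst py. unfold pos; cbn [fst snd]. f_equal. nra.
  - exfalso. assert (Hkj : (k < j \/ j < k)%nat) by (assert (k <> j) by congruence; lia).
    destruct Hkj as [L|L]; apply le_INR in L; rewrite S_INR in L; nra.
  - right. assert (py = IZR n - 1) by lra. subst py.
    unfold pos; cbn [fst snd]. rewrite minus_IZR. f_equal. nra.
Qed.

Lemma diamond_edges_disjoint x x' a b a' b' s t :
  diamond_edge x a b -> diamond_edge x' a' b' -> ~ (a = a' /\ b = b') ->
  0 < s < 1 -> 0 < t < 1 -> segment a b s <> segment a' b' t.
Proof.
  intros He He' Hne Hs Ht Eq.
  destruct (node_eq_dec x x') as [<-|Hx].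
  - pose proof (width_pos x).
    destruct He, He'; try (apply Hne; split; reflexivity);
      unfold segment in Eq; rewrite ?pos_lchild, ?pos_rchild, ?pos_D, ?pos_T in Eq;
      cbn [fst snd] in Eq; injection Eq as E1 E2; nra.
  - pose proof (diamond_edge_in_triangle x a b s He ltac:(lra)) as Tr.
    pose proof (diamond_edge_in_triangle x' a' b' t He' ltac:(lra)) as Tr'.
    rewrite Eq in Tr. destruct (triangles_meet_at_corners x x' _ Hx Tr Tr') as [P|P];
      exact (diamond_edge_avoids_vertices x' a' b' t _ He' Ht P).
Qed.

Lemma adj_segment_diamond u v s : adj u v -> 0 < s < 1 ->
  exists x a b s', diamond_edge x a b /\ 0 < s' < 1 /\ segment u v s = segment a b s' /\
    ((u = a /\ v = b) \/ (u = b /\ v = a)).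
Proof.
  intros A Hs. destruct (adj_diamond_edge u v A) as [x [He|He]].
  - exists x, u, v, s. split; [|split; [|split]]; auto.
  - exists x, v, u, (1 - s). split; [|split; [|split]]; auto; [lra | apply segment_sym].
Qed.

Lemma planar_adj : planar vertex adj.
Proof.
  exists pos, segment. split; [|split; [|split; [|split]]].
  - exact pos_inj.
  - intros u v A. apply segment_arc_ok. intro E. apply pos_inj in E. subst v.
    exact (adj_irrefl u A).
  - intros u v t _. apply segment_sym.
  - intros u v w t A Ht.
    destruct (adj_segment_diamond u v t A Ht) as [x [a [b [s' [He [Hs' [-> _]]]]]]].
    exact (diamond_edge_avoids_vertices x a b s' w He Hs').
  - intros u v u' v' s t A A' Hne Hs Ht.
    destruct (adj_segment_diamond u v s A Hs) as [x [a [b [s' [He [Hs' [-> O]]]]]]].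
    destruct (adj_segment_diamond u' v' t A' Ht) as [x' [a' [b' [t' [He' [Ht' [-> O']]]]]]].
    apply (diamond_edges_disjoint x x' a b a' b' s' t' He He'); auto.
    intros [<- <-]. apply Hne.
    destruct O as [[-> ->]|[-> ->]], O' as [[-> ->]|[-> ->]]; tauto.
Qed.

Theorem mainTheorem17 :
  exists (V : Type) (adj : V -> V -> Prop),
    simple_graph V adj /\ locally_finite V adj /\ quasi_transitive V adj /\
    planar V adj /\ treewidth_le adj 2 /\
    (forall o : V -> V -> Prop,
        orientation V adj o -> ~ periodic_orientation V adj o) /\
    (forall (C : Type) (c : V -> C),
        proper_coloring V adj C c -> ~ periodic_coloring V adj C c).
Proof.
  exists vertex, adj.
  split; [exact simple_adj|]. split; [exact locally_finite_adj|].
  split; [exact quasi_transitive_adj|]. split; [exact planar_adj|].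
  split; [exact treewidth_adj_le_2|]. split.
  - intros o Ho. destruct (orientation_stabilizer vertex adj o Ho) as [Hflip Hdiv].
    apply not_finitely_many_orbits_adj; auto. now intros f [Hf _].
  - intros C c Hc. destruct (coloring_stabilizer vertex adj C c Hc) as [Hflip Hdiv].
    apply not_finitely_many_orbits_adj; auto. now intros f [Hf _].
Qed.
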